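(* Let $\phi_1,\phi_2\in D=\{z\in\mathbb{C};|z|<1\}$ and let $Z$ be a random variable on the unit circle $\partial D$ with density, with respect to arc length, $$f(z)=\frac{1}{2\pi}\frac{|1-\phi_1\overline{\phi_2}|^2}{1-|\phi_1\overline{\phi_2}|^2}\frac{1-|\phi_1|^2}{|z-\phi_1|^2}\frac{1-|\phi_2|^2}{|z-\phi_2|^2}.$$ Then the skewness $s$ of $Z$ is $$s=\frac{|1-\phi_1\overline{\phi_2}|^2}{(1-|\phi_1\overline{\phi_2}|^2)^3}\rho^{-2}(1-\rho)^{-3/2}\operatorname{Im}(\phi_1\overline{\phi_2})(|\phi_1|^2-|\phi_2|^2)(1-|\phi_1|^2)(1-|\phi_2|^2),$$ where $\rho=|(1-|\phi_2|^2)\phi_1+(1-|\phi_1|^2)\phi_2|/(1-|\phi_1\overline{\phi_2}|^2)$.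
   Context: For a random variable $Z$ on the unit circle with $E(Z)\neq 0$, the mean direction is $\zeta=\arg\{E(Z)\}$, the mean resultant length is $\delta=|E(Z)|$, and the (Mardia) skewness is $s=E[\operatorname{Im}\{(Z\mathrm{e}^{-\mathrm{i}\zeta})^2\}]/(1-\delta)^{3/2}$. *)

From Stdlib Require Import Reals.
From Coquelicot Require Import Coquelicot.
Open Scope R_scope.

Definition circ (t : R) : C := (cos t, sin t).

(* Expectation of a real function h(Z) when Z has density g w.r.t. arc length
   on the unit circle (arc length parametrised by theta in [0, 2 pi]). *)
Definition Ecirc (g : C -> R) (h : C -> R) : R :=
  RInt (fun t => h (circ t) * g (circ t)) 0 (2 * PI).

Definition cmean (g : C -> R) : C := (Ecirc g Re, Ecirc g Im).

Definition mrl (g : C -> R) : R := Cmod (cmean g).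

Definition is_mean_direction (g : C -> R) (zeta : R) : Prop :=
  cmean g = Cmult (RtoC (mrl g)) (circ zeta).

Definition skewness (g : C -> R) (zeta : R) : R :=
  Ecirc g (fun z => Im (Cmult (Cmult z (circ (- zeta))) (Cmult z (circ (- zeta)))))
  / Rpower (1 - mrl g) (3 / 2).

Definition dens (p1 p2 : C) (z : C) : R :=
  / (2 * PI)
  * ((Cmod (Cminus 1 (Cmult p1 (Cconj p2)))) ^ 2
     / (1 - (Cmod (Cmult p1 (Cconj p2))) ^ 2))
  * ((1 - Cmod p1 ^ 2) / (Cmod (Cminus z p1)) ^ 2)
  * ((1 - Cmod p2 ^ 2) / (Cmod (Cminus z p2)) ^ 2).

Definition rho (p1 p2 : C) : R :=
  Cmod (Cplus (Cmult (RtoC (1 - Cmod p2 ^ 2)) p1) (Cmult (RtoC (1 - Cmod p1 ^ 2)) p2))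
  / (1 - (Cmod (Cmult p1 (Cconj p2))) ^ 2).

From Stdlib Require Import Reals Lra Psatz Classical.
From Coquelicot Require Import Coquelicot.
Open Scope R_scope.

(** For [|p| < 1] and [z = e^(it)] put [A_p(z) = 1 / (1 - p/z) = sum_k p^k z^-k].  The
    Poisson kernel [(1 - |p|^2) / |z - p|^2] equals [A_p + conj A_p - 1], and since [A_p]
    only has nonpositive frequencies, [int z^n A_p = 2 pi p^n] and
    [int z^(n+1) conj A_p = 0] over a period.  Partial fractions reduce the trigonometric
    moments of a product of two kernels to these integrals; with [a = p1 conj p2] and
    [D = 1 - |a|^2] one gets [E(Z) = m / D] and [E(Z^2) = m2 / D], where
    [m = (1 - |p2|^2) p1 + (1 - |p1|^2) p2] (so that [delta = rho]) and
    [m2 = p1^2 (1 - conj a) + p1 p2 |1 - a|^2 + p2^2 (1 - a)].  As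
    [e^(-i zeta) = conj m / (D delta)], the skewness is
    [Im (conj m ^2 m2) / (D^3 delta^2 (1 - delta)^(3/2))], and [Im (conj m ^2 m2)] factors
    as [|1 - a|^2 Im a (|p1|^2 - |p2|^2) (1 - |p1|^2) (1 - |p2|^2)]. *)

(** * Derivatives of complex functions of a real variable *)

Lemma is_derive_C_pair (f : R -> C) (x : R) (d : C) :
  is_derive (fun t => fst (f t)) x (fst d) ->
  is_derive (fun t => snd (f t)) x (snd d) ->
  is_derive f x d.
Proof.
  intros H1 H2. destruct d as [d1 d2].
  assert (Hid : filterdiff
      (K := R_AbsRing) (U := prod_NormedModule R_AbsRing R_NormedModule R_NormedModule)
      (V := prod_NormedModule R_AbsRing R_NormedModule R_NormedModule)
      (fun t => (fst t, snd t)) (locally (fst (f x), snd (f x))) (fun t => (fst t, snd t))).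
  { apply filterdiff_ext_lin with (fun t => t).
    - eapply filterdiff_ext; [| apply filterdiff_id]. now intros [u v].
    - now intros [u v]. }
  eapply filterdiff_ext;
    [| exact (filterdiff_comp'_2 _ _ (fun u v => (u, v)) x _ _ (fun u v => (u, v)) H1 H2 Hid)].
  intros t. simpl. now destruct (f t).
Qed.

Lemma is_derive_C_fst (f : R -> C) (x : R) (d : C) :
  is_derive f x d -> is_derive (fun t => fst (f t)) x (fst d).
Proof.
  intros H.
  exact (filterdiff_comp f fst (fun y => scal y d) fst H
    (filterdiff_linear _ (is_linear_fst (U := R_NormedModule) (V := R_NormedModule)))).
Qed.

Lemma is_derive_C_snd (f : R -> C) (x : R) (d : C) :
  is_derive f x d -> is_derive (fun t => snd (f t)) x (snd d).
Proof.
  intros H.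
  exact (filterdiff_comp f snd (fun y => scal y d) snd H
    (filterdiff_linear _ (is_linear_snd (U := R_NormedModule) (V := R_NormedModule)))).
Qed.

Lemma is_derive_eq {V : NormedModule R_AbsRing} (f : R -> V) (x : R) (l l' : V) :
  is_derive f x l -> l = l' -> is_derive f x l'.
Proof. now intros H <-. Qed.

Local Open Scope C_scope.

Ltac Cring := cbv beta; match goal with |- ?a = ?b => change (@eq C a b) end; ring.
Ltac Cfield :=
  cbv beta; match goal with |- ?a = ?b => change (@eq C a b) end; field; repeat split; auto.

Lemma is_derive_Cconst (c : C) (x : R) :
  is_derive (K := R_AbsRing) (V := C_R_NormedModule) (fun _ => c) x (RtoC 0).
Proof.
  apply is_derive_C_pair; simpl; apply (is_derive_const (K := R_AbsRing) (V := R_NormedModule)).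
Qed.

Lemma is_derive_Cplus (f g : R -> C) (x : R) (df dg : C) :
  is_derive f x df -> is_derive g x dg -> is_derive (fun t => f t + g t) x (df + dg).
Proof.
  intros Hf Hg. apply is_derive_C_pair; simpl.
  - exact (is_derive_plus _ _ _ _ _ (is_derive_C_fst _ _ _ Hf) (is_derive_C_fst _ _ _ Hg)).
  - exact (is_derive_plus _ _ _ _ _ (is_derive_C_snd _ _ _ Hf) (is_derive_C_snd _ _ _ Hg)).
Qed.

Lemma is_derive_Cminus (f g : R -> C) (x : R) (df dg : C) :
  is_derive f x df -> is_derive g x dg -> is_derive (fun t => f t - g t) x (df - dg).
Proof.
  intros Hf Hg. apply is_derive_C_pair; simpl.
  - exact (is_derive_minus _ _ _ _ _ (is_derive_C_fst _ _ _ Hf) (is_derive_C_fst _ _ _ Hg)).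
  - exact (is_derive_minus _ _ _ _ _ (is_derive_C_snd _ _ _ Hf) (is_derive_C_snd _ _ _ Hg)).
Qed.

Lemma is_derive_Cmult (f g : R -> C) (x : R) (df dg : C) :
  is_derive f x df -> is_derive g x dg ->
  is_derive (fun t => f t * g t) x (df * g x + f x * dg).
Proof.
  intros Hf Hg.
  pose proof (is_derive_C_fst _ _ _ Hf) as Hf1. pose proof (is_derive_C_snd _ _ _ Hf) as Hf2.
  pose proof (is_derive_C_fst _ _ _ Hg) as Hg1. pose proof (is_derive_C_snd _ _ _ Hg) as Hg2.
  apply is_derive_C_pair; eapply is_derive_eq.
  - exact (is_derive_minus _ _ _ _ _ (is_derive_mult _ _ _ _ _ Hf1 Hg1 Rmult_comm)
                                     (is_derive_mult _ _ _ _ _ Hf2 Hg2 Rmult_comm)).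
  - simpl. unfold minus, plus, opp, mult; simpl. ring.
  - exact (is_derive_plus _ _ _ _ _ (is_derive_mult _ _ _ _ _ Hf1 Hg2 Rmult_comm)
                                    (is_derive_mult _ _ _ _ _ Hf2 Hg1 Rmult_comm)).
  - simpl. unfold plus, mult; simpl. ring.
Qed.

Lemma is_derive_Cnorm2 (f : R -> C) (x : R) (df : C) :
  is_derive f x df ->
  is_derive (fun t => (fst (f t) ^ 2 + snd (f t) ^ 2)%R) x
    (2 * fst (f x) * fst df + 2 * snd (f x) * snd df)%R.
Proof.
  intros Hf.
  pose proof (is_derive_C_fst _ _ _ Hf) as H1. pose proof (is_derive_C_snd _ _ _ Hf) as H2.
  eapply is_derive_eq; [eapply is_derive_ext; [| exact (is_derive_plus _ _ _ _ _
      (is_derive_mult _ _ _ _ _ H1 H1 Rmult_comm) (is_derive_mult _ _ _ _ _ H2 H2 Rmult_comm))] |].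
  - intros t. simpl. unfold plus, mult; simpl. ring.
  - unfold plus, mult; simpl. ring.
Qed.

Lemma is_derive_Cinv (f : R -> C) (x : R) (df : C) :
  is_derive f x df -> f x <> 0 ->
  is_derive (fun t => / f t) x (- df * / f x * / f x).
Proof.
  intros Hf Hnz.
  pose proof (is_derive_C_fst _ _ _ Hf) as Hf1. pose proof (is_derive_C_snd _ _ _ Hf) as Hf2.
  assert (Hn : (fst (f x) ^ 2 + snd (f x) ^ 2)%R <> 0%R).
  { intros Hn. apply Hnz. destruct (f x) as [a b]; simpl in Hn.
    apply injective_projections; simpl; nra. }
  pose proof (is_derive_inv _ _ _ (is_derive_Cnorm2 f x df Hf) Hn) as HI.
  apply is_derive_C_pair; eapply is_derive_eq.
  - eapply is_derive_ext; [| exact (is_derive_mult _ _ _ _ _ Hf1 HI Rmult_comm)].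
    intros t. simpl. unfold mult; simpl. unfold Rdiv. ring.
  - simpl. unfold plus, mult; simpl. field. simpl in Hn. lra.
  - eapply is_derive_ext;
      [| exact (is_derive_scal _ _ (-1) _ (is_derive_mult _ _ _ _ _ Hf2 HI Rmult_comm))].
    intros t. simpl. unfold mult; simpl. unfold Rdiv. ring.
  - simpl. unfold plus, mult, scal; simpl. unfold mult; simpl. field. simpl in Hn. lra.
Qed.

Lemma is_derive_circ (x : R) : is_derive circ x (Ci * circ x).
Proof.
  apply is_derive_C_pair; unfold circ; simpl; eapply is_derive_eq.
  - apply is_derive_cos.
  - unfold Ci; simpl; ring.
  - apply is_derive_sin.
  - unfold Ci; simpl; ring.
Qed.

Lemma is_derive_circ_pow (n : nat) (x : R) :
  is_derive (fun t => circ t ^ n) x (RtoC (INR n) * Ci * circ x ^ n).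
Proof.
  induction n as [| n IH].
  - replace (RtoC (INR 0) * Ci * circ x ^ 0) with (RtoC 0).
    + exact (is_derive_Cconst 1 x).
    + apply injective_projections; simpl; ring.
  - replace (RtoC (INR (S n)) * Ci * circ x ^ S n)
      with (Ci * circ x * circ x ^ n + circ x * (INR n * Ci * circ x ^ n)).
    + exact (is_derive_Cmult _ _ _ _ _ (is_derive_circ x) IH).
    + rewrite S_INR, RtoC_plus. simpl. ring.
Qed.

(** A branch of the complex logarithm on the half-plane [Re u > 0]. *)
Definition Clog_right (u : C) : C := ((ln (fst u ^ 2 + snd u ^ 2) / 2)%R, atan (snd u / fst u)).

Lemma is_derive_Clog_right (u : R -> C) (x : R) (du : C) :
  is_derive u x du -> (0 < fst (u x))%R ->
  is_derive (fun t => Clog_right (u t)) x (du * / u x).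
Proof.
  intros Hu Hpos.
  pose proof (is_derive_C_fst _ _ _ Hu) as H1. pose proof (is_derive_C_snd _ _ _ Hu) as H2.
  assert (Hn : (0 < fst (u x) ^ 2 + snd (u x) ^ 2)%R) by nra.
  assert (Hq : is_derive (fun t => (snd (u t) / fst (u t))%R) x
                 ((snd du * fst (u x) - snd (u x) * fst du) / fst (u x) ^ 2)%R).
  { eapply is_derive_eq; [exact (is_derive_mult _ _ _ _ _ H2
        (is_derive_inv _ _ _ H1 (Rgt_not_eq _ _ Hpos)) Rmult_comm) |].
    unfold plus, mult; simpl. field. lra. }
  apply is_derive_C_pair; eapply is_derive_eq.
  - eapply is_derive_ext; [| apply is_derive_scal with (k := (/ 2)%R);
      exact (is_derive_comp ln _ x _ _ (proj2 (is_derive_Reals _ _ _) (derivable_pt_lim_ln _ Hn))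
               (is_derive_Cnorm2 u x du Hu))].
    intros t. simpl. unfold Rdiv. ring.
  - simpl. unfold scal; simpl. unfold mult; simpl. field. simpl in Hn. lra.
  - exact (is_derive_comp atan _ x _ _
             (proj2 (is_derive_Reals _ _ _) (derivable_pt_lim_atan _)) Hq).
  - simpl. unfold scal; simpl. unfold mult; simpl. field. simpl in Hn. split; nra.
Qed.

Ltac derive_C_step :=
  lazymatch goal with
  | |- is_derive (fun _ => ?c) _ _ => apply (is_derive_Cconst c)
  | |- is_derive (fun t => circ t) _ _ => apply is_derive_circ
  | |- is_derive circ _ _ => apply is_derive_circ
  | |- is_derive (fun t => (@?f t) * (@?g t)) _ _ => apply (is_derive_Cmult f g)
  | |- is_derive (fun t => (@?f t) + (@?g t)) _ _ => apply (is_derive_Cplus f g)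
  | |- is_derive (fun t => (@?f t) - (@?g t)) _ _ => apply (is_derive_Cminus f g)
  | |- is_derive (fun t => / (@?f t)) _ _ => apply (is_derive_Cinv f)
  end.
Ltac derive_C := derive_C_step; try derive_C.

(** * Integrals over a period *)

Definition is_RInt_2PI (f : R -> C) (l : C) : Prop :=
  is_RInt (V := C_R_NormedModule) f 0 (2 * PI) l.

Lemma is_RInt_2PI_fst (f : R -> C) (l : C) :
  is_RInt_2PI f l -> is_RInt (fun t => fst (f t)) 0 (2 * PI) (fst l).
Proof. apply (is_RInt_fct_extend_fst f). Qed.

Lemma is_RInt_2PI_snd (f : R -> C) (l : C) :
  is_RInt_2PI f l -> is_RInt (fun t => snd (f t)) 0 (2 * PI) (snd l).
Proof. apply (is_RInt_fct_extend_snd f). Qed.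

Lemma is_RInt_2PI_pair (f : R -> C) (l : C) :
  is_RInt (fun t => fst (f t)) 0 (2 * PI) (fst l) ->
  is_RInt (fun t => snd (f t)) 0 (2 * PI) (snd l) -> is_RInt_2PI f l.
Proof. destruct l. apply (is_RInt_fct_extend_pair f). Qed.

Lemma is_RInt_2PI_ext (f g : R -> C) (l l' : C) :
  (forall t, f t = g t) -> l = l' -> is_RInt_2PI f l -> is_RInt_2PI g l'.
Proof. intros Hfg <- Hf. eapply is_RInt_ext; [| exact Hf]. intros; apply Hfg. Qed.

Lemma is_RInt_2PI_plus (f g : R -> C) (lf lg : C) :
  is_RInt_2PI f lf -> is_RInt_2PI g lg -> is_RInt_2PI (fun t => f t + g t) (lf + lg).
Proof.
  intros Hf Hg. apply is_RInt_2PI_pair; simpl.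
  - exact (is_RInt_plus _ _ _ _ _ _ (is_RInt_2PI_fst _ _ Hf) (is_RInt_2PI_fst _ _ Hg)).
  - exact (is_RInt_plus _ _ _ _ _ _ (is_RInt_2PI_snd _ _ Hf) (is_RInt_2PI_snd _ _ Hg)).
Qed.

Lemma is_RInt_2PI_minus (f g : R -> C) (lf lg : C) :
  is_RInt_2PI f lf -> is_RInt_2PI g lg -> is_RInt_2PI (fun t => f t - g t) (lf - lg).
Proof.
  intros Hf Hg. apply is_RInt_2PI_pair; simpl.
  - exact (is_RInt_minus _ _ _ _ _ _ (is_RInt_2PI_fst _ _ Hf) (is_RInt_2PI_fst _ _ Hg)).
  - exact (is_RInt_minus _ _ _ _ _ _ (is_RInt_2PI_snd _ _ Hf) (is_RInt_2PI_snd _ _ Hg)).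
Qed.

Lemma is_RInt_2PI_Cmult (c : C) (f : R -> C) (l : C) :
  is_RInt_2PI f l -> is_RInt_2PI (fun t => c * f t) (c * l).
Proof.
  intros Hf. destruct c as [c1 c2].
  pose proof (is_RInt_2PI_fst _ _ Hf) as H1. pose proof (is_RInt_2PI_snd _ _ Hf) as H2.
  apply is_RInt_2PI_pair; simpl.
  - exact (is_RInt_minus _ _ _ _ _ _ (is_RInt_scal _ _ _ c1 _ H1) (is_RInt_scal _ _ _ c2 _ H2)).
  - exact (is_RInt_plus _ _ _ _ _ _ (is_RInt_scal _ _ _ c1 _ H2) (is_RInt_scal _ _ _ c2 _ H1)).
Qed.

Lemma is_RInt_2PI_conj (f : R -> C) (l : C) :
  is_RInt_2PI f l -> is_RInt_2PI (fun t => Cconj (f t)) (Cconj l).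
Proof.
  intros Hf. apply is_RInt_2PI_pair; simpl.
  - exact (is_RInt_2PI_fst _ _ Hf).
  - exact (is_RInt_opp _ _ _ _ (is_RInt_2PI_snd _ _ Hf)).
Qed.

Lemma is_RInt_2PI_const (c : C) : is_RInt_2PI (fun _ => c) (2 * PI * c).
Proof.
  eapply is_RInt_2PI_ext; [reflexivity | | apply is_RInt_const].
  destruct c as [c1 c2].
  apply injective_projections; simpl; unfold scal; simpl; unfold mult; simpl; ring.
Qed.

Lemma is_RInt_2PI_derive (F dF : R -> C) :
  (forall t, is_derive F t (dF t)) ->
  (forall t, ex_derive (K := R_AbsRing) (V := C_R_NormedModule) dF t) ->
  F (2 * PI)%R = F 0%R -> is_RInt_2PI dF 0.
Proof.
  intros HD HC HP.
  eapply is_RInt_2PI_ext; [reflexivity | |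
    apply (is_RInt_derive (V := C_R_CompleteNormedModule)); intros t _;
      [apply HD | apply (ex_derive_continuous (K := R_AbsRing) (V := C_R_NormedModule)), HC]].
  rewrite HP. destruct (F 0%R) as [a b].
  apply injective_projections; simpl; unfold minus, plus, opp; simpl; unfold plus, opp; simpl; ring.
Qed.

Lemma Ecirc_Re (g h : C -> R) (F : R -> C) (l : C) :
  is_RInt_2PI F l -> (forall t, h (circ t) * g (circ t) = Re (F t))%R -> Ecirc g h = Re l.
Proof.
  intros HF He. apply is_RInt_unique.
  eapply is_RInt_ext; [| exact (is_RInt_2PI_fst _ _ HF)]. intros t _. now rewrite He.
Qed.

Lemma Ecirc_Im (g h : C -> R) (F : R -> C) (l : C) :
  is_RInt_2PI F l -> (forall t, h (circ t) * g (circ t) = Im (F t))%R -> Ecirc g h = Im l.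
Proof.
  intros HF He. apply is_RInt_unique.
  eapply is_RInt_ext; [| exact (is_RInt_2PI_snd _ _ HF)]. intros t _. now rewrite He.
Qed.

(** * The kernels [A_p] and [conj A_p] on the unit circle *)

Lemma circ_2PI : circ (2 * PI) = circ 0.
Proof. unfold circ. now rewrite cos_2PI, sin_2PI, cos_0, sin_0. Qed.

Lemma circ_opp (t : R) : circ (- t) = Cconj (circ t).
Proof. unfold circ, Cconj. simpl. now rewrite cos_neg, sin_neg. Qed.

Lemma Cmod_circ (t : R) : Cmod (circ t) = 1%R.
Proof.
  unfold Cmod, circ; simpl. pose proof (sin2_cos2 t). unfold Rsqr in *.
  replace (cos t * (cos t * 1) + sin t * (sin t * 1))%R with 1%R by nra. apply sqrt_1.
Qed.

Lemma circ_neq_0 (t : R) : circ t <> 0.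
Proof. intros H. pose proof (Cmod_circ t) as H1. rewrite H, Cmod_0 in H1. lra. Qed.

Lemma Cconj_circ (t : R) : Cconj (circ t) = / circ t.
Proof.
  unfold circ, Cconj, Cinv; simpl. pose proof (sin2_cos2 t). unfold Rsqr in *.
  replace (cos t * (cos t * 1) + sin t * (sin t * 1))%R with 1%R by nra.
  apply injective_projections; simpl; field.
Qed.

Lemma Cmod_lt_1_Re (q : C) : (Cmod q < 1)%R -> (0 < Re (1 - q))%R.
Proof.
  intros Hq. destruct q as [a b]. unfold Cmod in Hq. simpl in *.
  enough (a < 1)%R by lra.
  apply Rnot_le_lt. intros Ha. apply (Rlt_irrefl 1).
  eapply Rle_lt_trans; [| exact Hq].
  apply Rle_trans with (sqrt 1); [rewrite sqrt_1; lra | apply sqrt_le_1_alt; nra].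
Qed.

Lemma Cmod_lt_1_sub_neq_0 (q : C) : (Cmod q < 1)%R -> 1 - q <> 0.
Proof. intros Hq H. pose proof (Cmod_lt_1_Re q Hq) as H1. rewrite H in H1. simpl in H1. lra. Qed.

Lemma Cmod_mul_Cconj_lt_1 (p q : C) :
  (Cmod p < 1)%R -> (Cmod q < 1)%R -> (Cmod (p * Cconj q) < 1)%R.
Proof.
  intros Hp Hq. rewrite Cmod_mult, Cmod_conj.
  pose proof (Cmod_ge_0 p). pose proof (Cmod_ge_0 q). nra.
Qed.

Lemma Cmod_mul_circ_lt_1 (p : C) (t : R) : (Cmod p < 1)%R -> (Cmod (p * circ t) < 1)%R.
Proof. intros Hp. now rewrite Cmod_mult, Cmod_circ, Rmult_1_r. Qed.

Lemma Cmod_div_circ_lt_1 (p : C) (t : R) : (Cmod p < 1)%R -> (Cmod (p * / circ t) < 1)%R.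
Proof. intros Hp. rewrite <- Cconj_circ, <- circ_opp. now apply Cmod_mul_circ_lt_1. Qed.

(** At [z = circ t], [Akern p = sum_k p^k z^-k] and [Bkern p = conj (Akern p)]. *)
Definition Akern (p : C) (t : R) : C := / (1 - p * / circ t).
Definition Bkern (p : C) (t : R) : C := / (1 - Cconj p * circ t).

Section Kernels.

Variables (p : C) (t : R).
Hypothesis Hp : (Cmod p < 1)%R.

Lemma Akern_denom_neq_0 : 1 - p * / circ t <> 0.
Proof. apply Cmod_lt_1_sub_neq_0, Cmod_div_circ_lt_1, Hp. Qed.

Lemma Bkern_denom_neq_0 : 1 - Cconj p * circ t <> 0.
Proof. apply Cmod_lt_1_sub_neq_0, Cmod_mul_circ_lt_1. now rewrite Cmod_conj. Qed.

Lemma circ_sub_neq_0 : circ t - p <> 0.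
Proof.
  intros E. apply (Rlt_irrefl 1). rewrite <- (Cmod_circ t) at 1.
  replace (circ t) with p; [exact Hp |]. symmetry. now apply Ceq_minus.
Qed.

Lemma circ_mul_Akern : circ t * Akern p t = circ t + p * Akern p t.
Proof.
  pose proof (circ_neq_0 t). pose proof Akern_denom_neq_0. pose proof circ_sub_neq_0.
  unfold Akern. Cfield.
Qed.

Lemma Bkern_sub_1 : Bkern p t - 1 = Cconj p * circ t * Bkern p t.
Proof. pose proof Bkern_denom_neq_0. unfold Bkern. Cfield. Qed.

Lemma Cconj_Akern : Cconj (Akern p t) = Bkern p t.
Proof.
  pose proof (circ_neq_0 t). pose proof Akern_denom_neq_0. pose proof Bkern_denom_neq_0.
  unfold Akern, Bkern. rewrite Cinv_conj, Cminus_conj, Cmult_conj, Cinv_conj, Cconj_circ by auto.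
  replace (Cconj 1) with (RtoC 1) by (apply injective_projections; simpl; ring). Cfield.
Qed.

Lemma poisson_kernel_circ :
  RtoC ((1 - Cmod p ^ 2) / Cmod (circ t - p) ^ 2)%R = Akern p t + Bkern p t - 1.
Proof.
  pose proof (circ_neq_0 t). pose proof Akern_denom_neq_0. pose proof Bkern_denom_neq_0.
  pose proof circ_sub_neq_0.
  assert (/ circ t - Cconj p <> 0).
  { intros E. apply Bkern_denom_neq_0.
    replace (1 - Cconj p * circ t) with (circ t * (/ circ t - Cconj p)) by Cfield.
    rewrite E. Cring. }
  rewrite RtoC_div by (apply pow_nonzero; intros E; now apply Cmod_eq_0 in E).
  rewrite RtoC_minus, !Cmod2_conj, Cminus_conj, Cconj_circ.
  unfold Akern, Bkern. Cfield.
Qed.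

End Kernels.

Lemma Akern_mul_Bkern (p q : C) (t : R) :
  (Cmod p < 1)%R -> (Cmod q < 1)%R ->
  Akern p t * Bkern q t = (Akern p t + Bkern q t - 1) / (1 - p * Cconj q).
Proof.
  intros Hp Hq. pose proof (circ_neq_0 t).
  pose proof (Akern_denom_neq_0 p t Hp). pose proof (Bkern_denom_neq_0 q t Hq).
  pose proof (circ_sub_neq_0 p t Hp).
  pose proof (Cmod_lt_1_sub_neq_0 _ (Cmod_mul_Cconj_lt_1 p q Hp Hq)).
  unfold Akern, Bkern. Cfield.
Qed.

Lemma Akern_mul_Akern (p q : C) (t : R) :
  (Cmod p < 1)%R -> (Cmod q < 1)%R ->
  (p - q) * (Akern p t * Akern q t) = p * Akern p t - q * Akern q t.
Proof.
  intros Hp Hq. pose proof (circ_neq_0 t).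
  pose proof (Akern_denom_neq_0 p t Hp). pose proof (Akern_denom_neq_0 q t Hq).
  pose proof (circ_sub_neq_0 p t Hp). pose proof (circ_sub_neq_0 q t Hq).
  unfold Akern. Cfield.
Qed.

Lemma is_derive_Akern (p : C) (t : R) :
  (Cmod p < 1)%R -> is_derive (Akern p) t (Ci * (Akern p t - Akern p t * Akern p t)).
Proof.
  intros Hp. pose proof (circ_neq_0 t). pose proof (Akern_denom_neq_0 p t Hp).
  pose proof (circ_sub_neq_0 p t Hp).
  unfold Akern. eapply is_derive_eq.
  - derive_C; auto.
  - Cfield.
Qed.

(** * Trigonometric moments of the kernels *)

Lemma is_RInt_2PI_circ_pow_S (n : nat) : is_RInt_2PI (fun t => circ t ^ S n) 0.
Proof.
  set (c := / (RtoC (INR (S n)) * Ci)).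
  assert (RtoC (INR (S n)) <> 0).
  { intros E. apply (f_equal fst) in E. simpl in E. now apply (not_0_INR (S n)). }
  assert (Ci <> 0) by (intros E; apply (f_equal snd) in E; simpl in E; lra).
  apply (is_RInt_2PI_derive (fun t => c * circ t ^ S n)).
  - intros t. eapply is_derive_eq;
      [exact (is_derive_Cmult _ _ _ _ _ (is_derive_Cconst c t) (is_derive_circ_pow (S n) t)) |].
    unfold c. Cfield.
  - intros t. eexists. exact (is_derive_circ_pow (S n) t).
  - now rewrite circ_2PI.
Qed.

Lemma is_RInt_2PI_Akern (p : C) : (Cmod p < 1)%R -> is_RInt_2PI (Akern p) (2 * PI).
Proof.
  intros Hp.
  assert (Hlog : is_RInt_2PI (fun t => Ci * (Akern p t - 1)) 0).
  { apply (is_RInt_2PI_derive (fun t => Clog_right (1 - p * / circ t))).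
    - intros t. pose proof (circ_neq_0 t). pose proof (Akern_denom_neq_0 p t Hp).
      pose proof (circ_sub_neq_0 p t Hp).
      eapply is_derive_eq.
      + apply (is_derive_Clog_right (fun t => 1 - p * / circ t)); [derive_C; auto |].
        apply Cmod_lt_1_Re, Cmod_div_circ_lt_1, Hp.
      + unfold Akern. Cfield.
    - intros t. pose proof (circ_neq_0 t). pose proof (Akern_denom_neq_0 p t Hp).
      eexists. unfold Akern. derive_C; auto.
    - now rewrite circ_2PI. }
  eapply is_RInt_2PI_ext;
    [| | exact (is_RInt_2PI_plus _ _ _ _
                 (is_RInt_2PI_const 1) (is_RInt_2PI_Cmult (- Ci) _ _ Hlog))].
  - intros t. simpl. unfold Ci. apply injective_projections; simpl; ring.
  - Cring.
Qed.

Lemma is_RInt_2PI_circ_pow_Akern (p : C) (n : nat) :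
  (Cmod p < 1)%R -> is_RInt_2PI (fun t => circ t ^ n * Akern p t) (2 * PI * p ^ n).
Proof.
  intros Hp. induction n as [| n IH].
  - eapply is_RInt_2PI_ext; [| | exact (is_RInt_2PI_Akern p Hp)]; intros; simpl; Cring.
  - eapply is_RInt_2PI_ext; [| | exact (is_RInt_2PI_plus _ _ _ _
                                   (is_RInt_2PI_circ_pow_S n) (is_RInt_2PI_Cmult p _ _ IH))].
    + intros t. simpl. transitivity (circ t ^ n * (circ t + p * Akern p t)); [Cring |].
      rewrite <- (circ_mul_Akern p t Hp). Cring.
    + simpl. Cring.
Qed.

Lemma is_RInt_2PI_Bkern_sub_1 (p : C) :
  (Cmod p < 1)%R -> is_RInt_2PI (fun t => Bkern p t - 1) 0.
Proof.
  intros Hp.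
  eapply is_RInt_2PI_ext; [| | exact (is_RInt_2PI_conj _ _ (is_RInt_2PI_minus _ _ _ _
                                  (is_RInt_2PI_Akern p Hp) (is_RInt_2PI_const 1)))].
  - intros t. cbv beta. rewrite Cminus_conj, Cconj_Akern by exact Hp.
    f_equal. apply injective_projections; simpl; ring.
  - apply injective_projections; simpl; ring.
Qed.

(** From [Bkern p - 1 = conj p z Bkern p]:
    [z^(n+1) (Bkern p - 1) = z^n (Bkern p - 1) / conj p - z^(n+1)]. *)
Lemma is_RInt_2PI_circ_pow_Bkern_sub_1_mul (p : C) (g : R -> C) :
  (Cmod p < 1)%R ->
  (forall n, is_RInt_2PI (fun t => circ t ^ S n * g t) 0) ->
  is_RInt_2PI (fun t => (Bkern p t - 1) * g t) 0 ->
  forall n, is_RInt_2PI (fun t => circ t ^ n * (Bkern p t - 1) * g t) 0.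
Proof.
  intros Hp Hg Hg0.
  destruct (classic (p = 0)) as [-> | Hp0].
  - intros n. eapply is_RInt_2PI_ext; [| | exact (is_RInt_2PI_const 0)].
    + intros t. unfold Bkern. replace (Cconj 0) with (RtoC 0)
        by (apply injective_projections; simpl; ring). Cfield.
    + Cring.
  - assert (Cconj p <> 0).
    { intros E. apply Hp0. rewrite <- (Cconj_conj p), E. apply injective_projections; simpl; ring. }
    induction n as [| n IH].
    + eapply is_RInt_2PI_ext; [| | exact Hg0]; intros; simpl; Cring.
    + eapply is_RInt_2PI_ext; [| | exact (is_RInt_2PI_minus _ _ _ _
                                      (is_RInt_2PI_Cmult (/ Cconj p) _ _ IH) (Hg n))].
      * intros t. cbv beta. rewrite (Bkern_sub_1 p t Hp) at 1. simpl. Cfield.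
      * Cring.
Qed.

Lemma is_RInt_2PI_circ_pow_S_Bkern (p : C) (n : nat) :
  (Cmod p < 1)%R -> is_RInt_2PI (fun t => circ t ^ S n * Bkern p t) 0.
Proof.
  intros Hp.
  assert (H1 : forall n, is_RInt_2PI (fun t => circ t ^ S n * 1) 0).
  { intros m. eapply is_RInt_2PI_ext; [| | exact (is_RInt_2PI_circ_pow_S m)]; intros; Cring. }
  assert (H0 : is_RInt_2PI (fun t => (Bkern p t - 1) * 1) 0).
  { eapply is_RInt_2PI_ext; [| | exact (is_RInt_2PI_Bkern_sub_1 p Hp)]; intros; Cring. }
  eapply is_RInt_2PI_ext; [| | exact (is_RInt_2PI_plus _ _ _ _
      (is_RInt_2PI_circ_pow_Bkern_sub_1_mul p _ Hp H1 H0 (S n)) (is_RInt_2PI_circ_pow_S n))].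
  - intros t. Cring.
  - Cring.
Qed.

Lemma is_RInt_2PI_Akern_mul (p q : C) :
  (Cmod p < 1)%R -> (Cmod q < 1)%R ->
  is_RInt_2PI (fun t => Akern p t * Akern q t) (2 * PI).
Proof.
  intros Hp Hq. destruct (classic (p = q)) as [<- | Hpq].
  - (* [Akern p ^ 2 = Akern p + Ci * (Akern p)'] *)
    assert (Hd : is_RInt_2PI (fun t => Akern p t * Akern p t - Akern p t) 0).
    { apply (is_RInt_2PI_derive (fun t => Ci * Akern p t)).
      - intros t. eapply is_derive_eq;
          [exact (is_derive_Cmult _ _ _ _ _ (is_derive_Cconst Ci t) (is_derive_Akern p t Hp)) |].
        unfold Ci. apply injective_projections; simpl; ring.
      - intros t. pose proof (circ_neq_0 t). pose proof (Akern_denom_neq_0 p t Hp).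
        eexists. unfold Akern. derive_C; auto.
      - unfold Akern. now rewrite circ_2PI. }
    eapply is_RInt_2PI_ext;
      [| | exact (is_RInt_2PI_plus _ _ _ _ Hd (is_RInt_2PI_Akern p Hp))]; intros; Cring.
  - assert (p - q <> 0) by (intros E; apply Hpq, Ceq_minus, E).
    eapply is_RInt_2PI_ext; [| | exact (is_RInt_2PI_Cmult (/ (p - q)) _ _ (is_RInt_2PI_minus _ _ _ _
        (is_RInt_2PI_Cmult p _ _ (is_RInt_2PI_Akern p Hp))
        (is_RInt_2PI_Cmult q _ _ (is_RInt_2PI_Akern q Hq))))].
    + intros t. cbv beta. rewrite <- (Akern_mul_Akern p q t Hp Hq). Cfield.
    + Cfield.
Qed.

Lemma is_RInt_2PI_circ_pow_S_Akern_mul (p q : C) (n : nat) (l : C) :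
  (Cmod p < 1)%R -> (Cmod q < 1)%R ->
  is_RInt_2PI (fun t => circ t ^ n * Akern p t * Akern q t) l ->
  is_RInt_2PI (fun t => circ t ^ S n * Akern p t * Akern q t) (2 * PI * q ^ S n + p * l).
Proof.
  intros Hp Hq Hl.
  eapply is_RInt_2PI_ext; [| | exact (is_RInt_2PI_plus _ _ _ _
      (is_RInt_2PI_circ_pow_Akern q (S n) Hq) (is_RInt_2PI_Cmult p _ _ Hl))].
  - intros t. simpl. transitivity (circ t ^ n * (circ t + p * Akern p t) * Akern q t); [Cring |].
    rewrite <- (circ_mul_Akern p t Hp). Cring.
  - Cring.
Qed.

Lemma is_RInt_2PI_circ_pow_S_Bkern_mul (p q : C) (n : nat) :
  (Cmod p < 1)%R -> (Cmod q < 1)%R ->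
  is_RInt_2PI (fun t => circ t ^ S n * Bkern p t * Bkern q t) 0.
Proof.
  intros Hp Hq.
  assert (H0 : is_RInt_2PI (fun t => (Bkern p t - 1) * Bkern q t) 0).
  { eapply is_RInt_2PI_ext; [| | exact (is_RInt_2PI_conj _ _ (is_RInt_2PI_minus _ _ _ _
        (is_RInt_2PI_Akern_mul p q Hp Hq) (is_RInt_2PI_Akern q Hq)))].
    - intros t. cbv beta. rewrite Cminus_conj, Cmult_conj, !Cconj_Akern by assumption. Cring.
    - apply injective_projections; simpl; ring. }
  eapply is_RInt_2PI_ext; [| | exact (is_RInt_2PI_plus _ _ _ _
      (is_RInt_2PI_circ_pow_Bkern_sub_1_mul p _ Hp (fun m => is_RInt_2PI_circ_pow_S_Bkern q m Hq)
         H0 (S n))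
      (is_RInt_2PI_circ_pow_S_Bkern q n Hq))].
  - intros t. Cring.
  - Cring.
Qed.

Definition poisson_prod (p q : C) (t : R) : C :=
  (Akern p t + Bkern p t - 1) * (Akern q t + Bkern q t - 1).

Lemma poisson_prod_partial_fractions (p q : C) (t : R) :
  (Cmod p < 1)%R -> (Cmod q < 1)%R ->
  poisson_prod p q t =
    Akern p t * Akern q t + Bkern p t * Bkern q t
    + (Akern p t + Bkern q t - 1) / (1 - p * Cconj q)
    + (Akern q t + Bkern p t - 1) / (1 - q * Cconj p)
    - (Akern p t + Bkern p t - 1) - (Akern q t + Bkern q t - 1) - 1.
Proof.
  intros Hp Hq. rewrite <- (Akern_mul_Bkern p q t), <- (Akern_mul_Bkern q p t) by assumption.
  unfold poisson_prod. Cring.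
Qed.

Lemma is_RInt_2PI_circ_pow_S_poisson_prod (p q : C) (n : nat) (l : C) :
  (Cmod p < 1)%R -> (Cmod q < 1)%R ->
  is_RInt_2PI (fun t => circ t ^ S n * Akern p t * Akern q t) l ->
  is_RInt_2PI (fun t => circ t ^ S n * poisson_prod p q t)
    (l + 2 * PI * (p ^ S n / (1 - p * Cconj q) + q ^ S n / (1 - q * Cconj p)
                   - p ^ S n - q ^ S n)).
Proof.
  intros Hp Hq Hl.
  pose proof (Cmod_lt_1_sub_neq_0 _ (Cmod_mul_Cconj_lt_1 p q Hp Hq)).
  pose proof (Cmod_lt_1_sub_neq_0 _ (Cmod_mul_Cconj_lt_1 q p Hq Hp)).
  pose proof (is_RInt_2PI_circ_pow_Akern p (S n) Hp) as HAp.
  pose proof (is_RInt_2PI_circ_pow_Akern q (S n) Hq) as HAq.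
  pose proof (is_RInt_2PI_circ_pow_S_Bkern p n Hp) as HBp.
  pose proof (is_RInt_2PI_circ_pow_S_Bkern q n Hq) as HBq.
  pose proof (is_RInt_2PI_circ_pow_S n) as H1.
  pose proof (fun f g lf lg => is_RInt_2PI_plus f g lf lg) as Hplus.
  pose proof (fun f g lf lg => is_RInt_2PI_minus f g lf lg) as Hminus.
  pose proof (fun c f lf => is_RInt_2PI_Cmult c f lf) as Hmul.
  eapply is_RInt_2PI_ext; [| | exact (Hminus _ _ _ _ (Hminus _ _ _ _ (Hminus _ _ _ _ (Hplus _ _ _ _
      (Hplus _ _ _ _ (Hplus _ _ _ _ Hl (is_RInt_2PI_circ_pow_S_Bkern_mul p q n Hp Hq))
        (Hmul (/ (1 - p * Cconj q)) _ _ (Hminus _ _ _ _ (Hplus _ _ _ _ HAp HBq) H1)))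
        (Hmul (/ (1 - q * Cconj p)) _ _ (Hminus _ _ _ _ (Hplus _ _ _ _ HAq HBp) H1)))
      (Hminus _ _ _ _ (Hplus _ _ _ _ HAp HBp) H1))
      (Hminus _ _ _ _ (Hplus _ _ _ _ HAq HBq) H1)) H1)].
  - intros t. rewrite poisson_prod_partial_fractions by assumption. Cfield.
  - Cfield.
Qed.

Lemma is_RInt_2PI_circ_poisson_prod (p q : C) :
  (Cmod p < 1)%R -> (Cmod q < 1)%R ->
  is_RInt_2PI (fun t => circ t ^ 1 * poisson_prod p q t)
    (2 * PI * (p / (1 - p * Cconj q) + q / (1 - q * Cconj p))).
Proof.
  intros Hp Hq.
  pose proof (Cmod_lt_1_sub_neq_0 _ (Cmod_mul_Cconj_lt_1 p q Hp Hq)).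
  pose proof (Cmod_lt_1_sub_neq_0 _ (Cmod_mul_Cconj_lt_1 q p Hq Hp)).
  assert (HAA : is_RInt_2PI (fun t => circ t ^ 0 * Akern p t * Akern q t) (2 * PI)).
  { eapply is_RInt_2PI_ext; [| | exact (is_RInt_2PI_Akern_mul p q Hp Hq)]; intros; simpl; Cring. }
  eapply is_RInt_2PI_ext; [| | exact (is_RInt_2PI_circ_pow_S_poisson_prod p q 0 _ Hp Hq
      (is_RInt_2PI_circ_pow_S_Akern_mul p q 0 _ Hp Hq HAA))]; [reflexivity |].
  simpl. Cfield.
Qed.

Lemma is_RInt_2PI_circ_sq_poisson_prod (p q : C) :
  (Cmod p < 1)%R -> (Cmod q < 1)%R ->
  is_RInt_2PI (fun t => circ t ^ 2 * poisson_prod p q t)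
    (2 * PI * (p ^ 2 / (1 - p * Cconj q) + p * q + q ^ 2 / (1 - q * Cconj p))).
Proof.
  intros Hp Hq.
  pose proof (Cmod_lt_1_sub_neq_0 _ (Cmod_mul_Cconj_lt_1 p q Hp Hq)).
  pose proof (Cmod_lt_1_sub_neq_0 _ (Cmod_mul_Cconj_lt_1 q p Hq Hp)).
  assert (HAA : is_RInt_2PI (fun t => circ t ^ 0 * Akern p t * Akern q t) (2 * PI)).
  { eapply is_RInt_2PI_ext; [| | exact (is_RInt_2PI_Akern_mul p q Hp Hq)]; intros; simpl; Cring. }
  eapply is_RInt_2PI_ext; [| | exact (is_RInt_2PI_circ_pow_S_poisson_prod p q 1 _ Hp Hq
      (is_RInt_2PI_circ_pow_S_Akern_mul p q 1 _ Hp Hq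
        (is_RInt_2PI_circ_pow_S_Akern_mul p q 0 _ Hp Hq HAA)))]; [reflexivity |].
  simpl. Cfield.
Qed.

(** * Mean and skewness of the density *)

Lemma Cconj_RtoC (r : R) : Cconj (RtoC r) = RtoC r.
Proof. apply injective_projections; simpl; ring. Qed.

Lemma RtoC_PI_neq_0 : RtoC PI <> 0.
Proof. intros E. apply (f_equal fst) in E. simpl in E. pose proof PI_RGT_0. lra. Qed.

Lemma Im_sq_div_RtoC (m s : C) (d r : R) :
  d <> 0%R -> r <> 0%R ->
  Im (m / RtoC d / RtoC r * (m / RtoC d / RtoC r) * s / RtoC d) =
  (Im (m * m * s) / (d ^ 3 * r ^ 2))%R.
Proof.
  intros Hd Hr.
  assert (RtoC d <> 0) by (intros E; apply (f_equal fst) in E; simpl in E; lra).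
  assert (RtoC r <> 0) by (intros E; apply (f_equal fst) in E; simpl in E; lra).
  unfold Rdiv. rewrite <- im_scal_r, RtoC_inv, RtoC_mult, !RtoC_pow
    by (apply Rmult_integral_contrapositive; split; apply pow_nonzero; lra).
  f_equal. Cfield.
Qed.

Lemma Cmod_sqr (z : C) : (Cmod z ^ 2 = Re z ^ 2 + Im z ^ 2)%R.
Proof. unfold Cmod. rewrite pow2_sqrt; [reflexivity | nra]. Qed.

Lemma circ_opp_mean_direction (g : C -> R) (zeta : R) :
  cmean g <> 0 -> is_mean_direction g zeta ->
  circ (- zeta) = Cconj (cmean g) / RtoC (mrl g).
Proof.
  intros Hnz Hdir.
  assert (RtoC (mrl g) <> 0).
  { intros E. apply (f_equal fst) in E. simpl in E.
    apply Cmod_gt_0 in Hnz. unfold mrl in E. lra. }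
  rewrite Hdir, Cmult_conj, Cconj_RtoC, circ_opp. Cfield.
Qed.

Definition mean_num (p1 p2 : C) : C :=
  Cplus (Cmult (RtoC (1 - Cmod p2 ^ 2)) p1) (Cmult (RtoC (1 - Cmod p1 ^ 2)) p2).

Definition second_num (p1 p2 : C) : C :=
  p1 ^ 2 * (1 - Cconj p1 * p2) + p1 * p2 * (1 - p1 * Cconj p2) * (1 - Cconj p1 * p2)
  + p2 ^ 2 * (1 - p1 * Cconj p2).

Section Density.

Variables p1 p2 : C.
Hypotheses (H1 : (Cmod p1 < 1)%R) (H2 : (Cmod p2 < 1)%R).

Let D : R := 1 - Cmod (p1 * Cconj p2) ^ 2.
Let K : C := / (2 * PI) * ((1 - p1 * Cconj p2) * (1 - Cconj p1 * p2) / RtoC D).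

Lemma dens_denom_pos : (0 < D)%R.
Proof.
  pose proof (Cmod_mul_Cconj_lt_1 p1 p2 H1 H2). pose proof (Cmod_ge_0 (p1 * Cconj p2)).
  unfold D. nra.
Qed.

Lemma dens_denom_neq_0 : RtoC D <> 0.
Proof. intros E. apply (f_equal fst) in E. simpl in E. pose proof dens_denom_pos. lra. Qed.

Lemma dens_circ (t : R) : RtoC (dens p1 p2 (circ t)) = K * poisson_prod p1 p2 t.
Proof.
  pose proof dens_denom_pos.
  unfold dens, poisson_prod. rewrite <- (poisson_kernel_circ p1 t), <- (poisson_kernel_circ p2 t)
    by assumption.
  rewrite !RtoC_mult, RtoC_inv, RtoC_div, Cmod2_conj, Cminus_conj, Cmult_conj, Cconj_conj
    by (unfold D in *; pose proof PI_RGT_0; lra).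
  replace (Cconj 1) with (RtoC 1) by (apply injective_projections; simpl; ring).
  unfold K, D. rewrite RtoC_mult. Cring.
Qed.

Lemma cmean_dens : cmean (dens p1 p2) = mean_num p1 p2 / RtoC D.
Proof.
  pose proof dens_denom_neq_0.
  pose proof (Cmod_lt_1_sub_neq_0 _ (Cmod_mul_Cconj_lt_1 p1 p2 H1 H2)).
  pose proof (Cmod_lt_1_sub_neq_0 _ (Cmod_mul_Cconj_lt_1 p2 p1 H2 H1)).
  pose proof RtoC_PI_neq_0.
  pose proof (is_RInt_2PI_Cmult K _ _ (is_RInt_2PI_circ_poisson_prod p1 p2 H1 H2)) as HI.
  assert (Hpt : forall t,
             circ t * RtoC (dens p1 p2 (circ t)) = K * (circ t ^ 1 * poisson_prod p1 p2 t)).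
  { intros t. rewrite dens_circ. simpl. Cring. }
  assert (Hl : K * (2 * PI * (p1 / (1 - p1 * Cconj p2) + p2 / (1 - p2 * Cconj p1)))
                = mean_num p1 p2 / RtoC D).
  { unfold mean_num, K. rewrite !RtoC_minus, !Cmod2_conj. Cfield. }
  unfold cmean. rewrite <- Hl. apply injective_projections; cbn [fst snd].
  - apply (Ecirc_Re _ _ _ _ HI). intros t. rewrite <- Hpt, re_scal_r. reflexivity.
  - apply (Ecirc_Im _ _ _ _ HI). intros t. rewrite <- Hpt, im_scal_r. reflexivity.
Qed.

Lemma mrl_dens : mrl (dens p1 p2) = rho p1 p2.
Proof.
  pose proof dens_denom_pos.
  unfold mrl, rho.
  rewrite cmean_dens, Cmod_div, Cmod_R, Rabs_pos_eq by (auto using dens_denom_neq_0; lra).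
  reflexivity.
Qed.

Lemma Ecirc_dens_Im_sq (w : C) :
  Ecirc (dens p1 p2) (fun z => Im (z * w * (z * w))) = Im (w * w * second_num p1 p2 / RtoC D).
Proof.
  pose proof dens_denom_neq_0.
  pose proof (Cmod_lt_1_sub_neq_0 _ (Cmod_mul_Cconj_lt_1 p1 p2 H1 H2)).
  pose proof (Cmod_lt_1_sub_neq_0 _ (Cmod_mul_Cconj_lt_1 p2 p1 H2 H1)).
  pose proof RtoC_PI_neq_0.
  pose proof (is_RInt_2PI_Cmult (w * w * K) _ _ (is_RInt_2PI_circ_sq_poisson_prod p1 p2 H1 H2))
    as HI.
  rewrite (Ecirc_Im _ _ _ _ HI).
  - f_equal. unfold K, second_num. Cfield.
  - intros t. rewrite <- im_scal_r, dens_circ. f_equal. simpl. Cring.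
Qed.

End Density.

Lemma Im_skewness_numerator (p1 p2 : C) :
  Im (Cconj (mean_num p1 p2) * Cconj (mean_num p1 p2) * second_num p1 p2) =
  ((Cmod (Cminus 1 (Cmult p1 (Cconj p2)))) ^ 2 * Im (Cmult p1 (Cconj p2))
    * (Cmod p1 ^ 2 - Cmod p2 ^ 2) * (1 - Cmod p1 ^ 2) * (1 - Cmod p2 ^ 2))%R.
Proof.
  unfold mean_num, second_num. rewrite !Cmod_sqr.
  destruct p1 as [x1 y1], p2 as [x2 y2]. simpl. ring.
Qed.

Local Close Scope C_scope.

Theorem corollary2 (p1 p2 : C) (zeta : R) :
  Cmod p1 < 1 -> Cmod p2 < 1 ->
  cmean (dens p1 p2) <> RtoC 0 ->
  is_mean_direction (dens p1 p2) zeta ->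
  skewness (dens p1 p2) zeta =
    (Cmod (Cminus 1 (Cmult p1 (Cconj p2)))) ^ 2
      / (1 - (Cmod (Cmult p1 (Cconj p2))) ^ 2) ^ 3
    * / (rho p1 p2) ^ 2
    * / Rpower (1 - rho p1 p2) (3 / 2)
    * Im (Cmult p1 (Cconj p2))
    * (Cmod p1 ^ 2 - Cmod p2 ^ 2)
    * (1 - Cmod p1 ^ 2) * (1 - Cmod p2 ^ 2).
Proof.
  intros H1 H2 Hnz Hdir.
  pose proof (dens_denom_pos p1 p2 H1 H2).
  pose proof (dens_denom_neq_0 p1 p2 H1 H2).
  assert (Hrho : 0 < rho p1 p2) by (rewrite <- mrl_dens by assumption; now apply Cmod_gt_0).
  assert (0 < Rpower (1 - rho p1 p2) (3 / 2)) by (unfold Rpower; apply exp_pos).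
  unfold skewness.
  rewrite (circ_opp_mean_direction _ _ Hnz Hdir), Ecirc_dens_Im_sq, mrl_dens, cmean_dens,
    Cdiv_conj, Cconj_RtoC, Im_sq_div_RtoC, Im_skewness_numerator by (auto; lra).
  field. repeat split; lra.
Qed.
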